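(* Let $L$ be a frame and $X_L$ its Priestley space with Stone map $\varphi$. (1) For $a\in L$, we have $a=\bigvee\{b\in K(L)\mid b\le a\}$ if and only if $\mathrm{core}\,\varphi(a)$ is dense in $\varphi(a)$. (2) $L$ is an algebraic frame if and only if $X_L$ is an algebraic L-space.
   Context: A frame is a complete lattice satisfying $a\wedge\bigvee S=\bigvee\{a\wedge s\mid s\in S\}$. In a frame $L$, $a\ll b$ means: whenever $b\le\bigvee S$ there is a finite $T\subseteq S$ with $a\le\bigvee T$; $a$ is compact if $a\ll a$, and $K(L)$ is the set of compact elements. $L$ is an algebraic frame if every $a\in L$ satisfies $a=\bigvee\{b\in K(L)\mid b\le a\}$. A Priestley space is a Stone space $X$ with a partial order such that clopen upsets separate points (if $x\not\le y$ there is a clopen upset containing $x$ but not $y$). An L-space is a Priestley space in which the downset of each clopen set is clopen and the closure of each open upset is open. ${\sf ClopUp}(X)$ denotes the set of clopen upsets of $X$. The Priestley space $X_L$ of a frame $L$ is the set of prime filters of $L$ ordered by inclusion, topologized by the subbasis $\{\varphi(a)\}\cup\{X_L\setminus\varphi(a)\}$ ($a\in L$), where $\varphi(a)=\{x\in X_L\mid a\in x\}$; it is an L-space. For an L-space $X$, its spatial part is $Y=\{y\in X\mid {\downarrow}y \text{ is clopen}\}$. A Scott upset of $X$ is a closed upset $F$ with $\min F\subseteq Y$; ${\sf ClopSUp}(X)$ is the set of clopen Scott upsets. For $U\in{\sf ClopUp}(X)$, $\mathrm{core}\,U=\bigcup\{V\in{\sf ClopSUp}(X)\mid V\subseteq U\}$.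 $X$ is an algebraic L-space if $\mathrm{core}\,U$ is dense in $U$ for every $U\in{\sf ClopUp}(X)$. *)

From HB Require Import structures.
From mathcomp Require Import all_boot all_order.
From mathcomp Require Import boolp classical_sets cardinality topology.
Set Implicit Arguments.
Unset Strict Implicit.
Unset Printing Implicit Defensive.
Local Open Scope classical_set_scope.

Record frame := Frame {
  fcarrier :> Type;
  fle : fcarrier -> fcarrier -> Prop;
  fle_refl : forall a, fle a a;
  fle_trans : forall a b c, fle a b -> fle b c -> fle a c;
  fle_antisym : forall a b, fle a b -> fle b a -> a = b;
  fsup : set fcarrier -> fcarrier;
  fsup_ub : forall S a, S a -> fle a (fsup S);
  fsup_least : forall S b, (forall a, S a -> fle a b) -> fle (fsup S) b;
  fmeet : fcarrier -> fcarrier -> fcarrier;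
  fmeet_lel : forall a b, fle (fmeet a b) a;
  fmeet_ler : forall a b, fle (fmeet a b) b;
  fmeet_glb : forall a b c, fle c a -> fle c b -> fle c (fmeet a b);
  fmeet_sup_distr : forall a S,
    fmeet a (fsup S) = fsup [set c | exists2 s, S s & c = fmeet a s]
}.

Section FrameDefs.
Variable L : frame.

Definition ftop : L := fsup setT.
Definition fbot : L := fsup set0.
Definition fjoin (a b : L) : L := fsup [set a; b].

Definition way_below (a b : L) : Prop :=
  forall S : set L, fle b (fsup S) ->
    exists2 T : set L, finite_set T /\ T `<=` S & fle a (fsup T).

Definition compact_el (a : L) : Prop := way_below a a.

Definition KL : set L := [set a | compact_el a].

Definition algebraic_frame : Prop :=
  forall a : L, a = fsup [set b | KL b /\ fle b a].

Definition prime_filter (F : set L) : Prop :=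
  [/\ F ftop, ~ F fbot,
      (forall a b, F a -> fle a b -> F b),
      (forall a b, F a -> F b -> F (fmeet a b)) &
      (forall a b, F (fjoin a b) -> F a \/ F b)].
End FrameDefs.

Definition XL (L : frame) := {F : set L | prime_filter F}.

HB.instance Definition _ (L : frame) := gen_eqMixin (XL L).
HB.instance Definition _ (L : frame) := gen_choiceMixin (XL L).

Definition phi (L : frame) (a : L) : set (XL L) := [set x | proj1_sig x a].

Definition XL_subbase (L : frame) : set (set (XL L)) :=
  [set U | exists a : L, U = phi a \/ U = ~` phi a].

HB.instance Definition _ (L : frame) :=
  @isSubBaseTopological.Build (XL L) (set (XL L)) (@XL_subbase L) id.

Definition XL_le (L : frame) (x y : XL L) : Prop :=
  proj1_sig x `<=` proj1_sig y.

Section Spaces.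
Variables (X : topologicalType) (le : X -> X -> Prop).

Definition upset (U : set X) : Prop := forall x y, U x -> le x y -> U y.
Definition downset_of (U : set X) : set X := [set y | exists2 x, U x & le y x].

Definition stone_space : Prop :=
  [/\ compact [set: X], hausdorff_space X & totally_disconnected [set: X]].

Definition partial_order : Prop :=
  [/\ (forall x, le x x), (forall x y z, le x y -> le y z -> le x z) &
      (forall x y, le x y -> le y x -> x = y)].

Definition priestley_space : Prop :=
  [/\ stone_space, partial_order &
      forall x y, ~ le x y ->
        exists U : set X, [/\ clopen U, upset U, U x & ~ U y]].

Definition L_space : Prop :=
  [/\ priestley_space,
      (forall U : set X, clopen U -> clopen (downset_of U)) &
      (forall U : set X, open U -> upset U -> open (closure U))].

Definition ClopUp : set (set X) := [set U | clopen U /\ upset U].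

Definition spatial_part : set X := [set y | clopen (downset_of [set y])].

Definition minimal_elts (F : set X) : set X :=
  [set x | F x /\ forall y, F y -> le y x -> y = x].

Definition scott_upset (F : set X) : Prop :=
  [/\ closed F, upset F & minimal_elts F `<=` spatial_part].

Definition ClopSUp : set (set X) := [set V | clopen V /\ scott_upset V].

Definition core (U : set X) : set X :=
  \bigcup_(V in [set V | ClopSUp V /\ V `<=` U]) V.

Definition dense_in (A U : set X) : Prop := U `<=` closure A.

Definition algebraic_L_space : Prop :=
  L_space /\ forall U, ClopUp U -> dense_in (core U) U.
End Spaces.

(* Every clopen upset of X_L is phi a for some a, and a point of X_L lies in
   the spatial part exactly when it is a completely prime filter.  If b is
   compact, the minimal points of phi b are completely prime; conversely, if
   all of them are, then b is compact, because by Zorn's lemma every point of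
   phi b lies above a minimal one.  Hence the clopen Scott upsets are the phi b
   with b compact, core (phi a) is the union of the phi b with b compact and
   b <= a, and its closure is phi of their join.  As phi reflects the order,
   density of the core in phi a says exactly that a is below this join.  Part
   (2) follows since X_L is an L-space whose clopen upsets are the phi a. *)

From HB Require Import structures.
From mathcomp Require Import all_boot all_order.
From mathcomp Require Import boolp classical_sets cardinality topology.
Local Open Scope classical_set_scope.
Set Implicit Arguments.
Unset Strict Implicit.

Lemma Zorn_bigcup_above (T : Type) (P : set (set T)) (A0 : set T) :
  P A0 ->
  (forall F : set (set T), F `<=` P -> F !=set0 -> total_on F subset ->
     P (\bigcup_(X in F) X)) ->
  exists A, [/\ P A, A0 `<=` A & forall B, A `<` B -> ~ P B].
Proof.
move=> PA0 chainP.
(* Zorn_bigcup also needs the union of the empty chain; shifting by A0 provides it. *)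
have [|A [PA Amax]] := @Zorn_bigcup T [set A | P (A0 `|` A)].
  move=> F FQ Ftot; have [->|/set0P F0] := eqVneq F set0.
    by rewrite /= bigcup_set0 setU0.
  rewrite /= -bigcupUr // -(bigcup_image F (setU A0) id).
  apply: chainP; first by move=> _ [X FX <-]; exact: FQ.
    by case: F0 => X FX; exists (A0 `|` X), X.
  move=> _ _ [X FX <-] [Y FY <-].
  by case: (Ftot X Y FX FY) => XY; [left|right]; exact: setUS.
exists (A0 `|` A); split=> // B AB PB.
apply: (Amax B); last first.
  by rewrite /= (setUidr (subset_trans (@subsetUl _ _ A) (properW AB))).
case: AB => AB BA; split; first exact: subset_trans (@subsetUr _ A0 A) AB.
by move=> BA'; apply: BA; exact: subset_trans BA' (@subsetUr _ A0 A).
Qed.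

Lemma Zorn_bigcap_below (T : Type) (P : set (set T)) (A0 : set T) :
  P A0 ->
  (forall F : set (set T), F `<=` P -> F !=set0 -> total_on F subset ->
     P (\bigcap_(X in F) X)) ->
  exists A, [/\ P A, A `<=` A0 & forall B, B `<` A -> ~ P B].
Proof.
move=> PA0 chainP.
have [||A [PA A0A Amax]] := @Zorn_bigcup_above T [set C | P (~` C)] (~` A0).
- by rewrite /= setCK.
- move=> F FQ F0 Ftot; rewrite /= setC_bigcup -(bigcap_image F setC id).
  apply: chainP; first by move=> _ [X FX <-]; exact: FQ.
    by case: F0 => X FX; exists (~` X), X.
  move=> _ _ [X FX <-] [Y FY <-].
  by case: (Ftot X Y FX FY) => XY; [right|left]; exact: subsetC.
exists (~` A); split=> // [|B BA PB]; first by rewrite -(setCK A0); exact: subsetC.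
apply: (Amax (~` B)); last by rewrite /= setCK.
case: BA => BA AB; split; first by rewrite -(setCK A); exact: subsetC.
by move=> /subsetC; rewrite !setCK.
Qed.

(* Classical equality on frame elements, to enumerate finite sets of them. *)
HB.instance Definition _ (L : frame) := gen_eqMixin (fcarrier L).

Local Notation "a ⊑ b" := (fle a b) (at level 70).

Section FrameLattice.
Variable L : frame.
Implicit Types (a b c d : L) (S T : set L).

Lemma fle_ftop a : a ⊑ ftop L.
Proof. exact: fsup_ub. Qed.

Lemma fbot_le a : fbot L ⊑ a.
Proof. by apply: fsup_least. Qed.

Lemma fjoin_ubl a b : a ⊑ fjoin a b.
Proof. by apply: fsup_ub; left. Qed.

Lemma fjoin_ubr a b : b ⊑ fjoin a b.
Proof. by apply: fsup_ub; right. Qed.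

Lemma fjoin_lub a b c : a ⊑ c -> b ⊑ c -> fjoin a b ⊑ c.
Proof. by move=> ac bc; apply: fsup_least => x [->|->]. Qed.

Lemma fmeet_le2 a b c d : a ⊑ c -> b ⊑ d -> fmeet a b ⊑ fmeet c d.
Proof.
move=> ac bd; apply: fmeet_glb.
- exact: fle_trans (fmeet_lel _ _) ac.
- exact: fle_trans (fmeet_ler _ _) bd.
Qed.

Lemma fjoin_le2 a b c d : a ⊑ c -> b ⊑ d -> fjoin a b ⊑ fjoin c d.
Proof.
move=> ac bd; apply: fjoin_lub.
- exact: fle_trans ac (fjoin_ubl _ _).
- exact: fle_trans bd (fjoin_ubr _ _).
Qed.

Lemma fsup_subset S T : S `<=` T -> fsup S ⊑ fsup T.
Proof. by move=> ST; apply: fsup_least => s /ST; apply: fsup_ub. Qed.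

Lemma fmeet_fsup_le a S c :
  (forall s, S s -> fmeet a s ⊑ c) -> fmeet a (fsup S) ⊑ c.
Proof.
by move=> H; rewrite fmeet_sup_distr; apply: fsup_least => _ [s Ss ->]; exact: H.
Qed.

Lemma fmeet_fjoin_le a b c : fmeet a (fjoin b c) ⊑ fjoin (fmeet a b) (fmeet a c).
Proof. by apply: fmeet_fsup_le => s [->|->]; [exact: fjoin_ubl | exact: fjoin_ubr]. Qed.

Definition fimp a c : L := fsup [set d | fmeet a d ⊑ c].

Lemma fmeet_fimp_le a c : fmeet a (fimp a c) ⊑ c.
Proof. exact: fmeet_fsup_le. Qed.

Lemma fle_fimp a c d : fmeet a d ⊑ c -> d ⊑ fimp a c.
Proof. by move=> H; apply: fsup_ub. Qed.

Definition is_filter (F : set L) :=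
  [/\ F (ftop L), (forall a b, F a -> a ⊑ b -> F b) &
      (forall a b, F a -> F b -> F (fmeet a b))].

Definition is_ideal (I : set L) :=
  [/\ I (fbot L), (forall a b, I b -> a ⊑ b -> I a) &
      (forall a b, I a -> I b -> I (fjoin a b))].

Lemma is_filter_principal a : is_filter [set b | a ⊑ b].
Proof.
split; first exact: fle_ftop.
- by move=> b c ab bc; exact: fle_trans bc.
- by move=> b c; exact: fmeet_glb.
Qed.

Lemma is_ideal_principal b : is_ideal [set a | a ⊑ b].
Proof.
split; first exact: fbot_le.
- by move=> a c cb ac; exact: fle_trans cb.
- by move=> a c; exact: fjoin_lub.
Qed.

Lemma prime_filterW F : prime_filter F -> is_filter F.
Proof. by case. Qed.

Lemma is_ideal_compl_prime F : prime_filter F -> is_ideal (~` F).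
Proof.
case=> _ Fbot Fup _ Fjoin; split=> // [a b nFb ab Fa|a b nFa nFb /Fjoin []//].
exact/nFb/(Fup _ _ Fa).
Qed.

Definition adjoin_filter (G : set L) c := [set e | exists2 m, G m & fmeet m c ⊑ e].

Lemma is_filter_adjoin G c : is_filter G -> is_filter (adjoin_filter G c).
Proof.
case=> Gtop _ Gmeet; split; first by exists (ftop L) => //; exact: fle_ftop.
- by move=> e f [m Gm me] ef; exists m => //; exact: fle_trans ef.
- move=> e f [m Gm me] [m' Gm' m'f]; exists (fmeet m m'); first exact: Gmeet.
  by apply: fmeet_glb; [apply: fle_trans me | apply: fle_trans m'f];
     apply: fmeet_le2 (fle_refl _); [exact: fmeet_lel | exact: fmeet_ler].
Qed.

Definition adjoin_ideal (I : set L) s := [set e | exists2 j, I j & e ⊑ fjoin j s].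

Lemma is_ideal_adjoin I s : is_ideal I -> is_ideal (adjoin_ideal I s).
Proof.
case=> Ibot _ Ijoin; split; first by exists (fbot L) => //; exact: fbot_le.
- by move=> e f [j Ij fj] ef; exists j => //; exact: fle_trans fj.
- move=> e f [j Ij ej] [j' Ij' fj']; exists (fjoin j j'); first exact: Ijoin.
  by apply: fjoin_lub; [apply: fle_trans ej _ | apply: fle_trans fj' _];
     apply: fjoin_le2 (fle_refl _); [exact: fjoin_ubl | exact: fjoin_ubr].
Qed.

Lemma ideal_fsup I T : is_ideal I -> finite_set T -> T `<=` I -> I (fsup T).
Proof.
case=> Ibot Idown Ijoin /finite_seqP [s ->]; elim: s => [|t s IH] sI.
  by rewrite set_nil.
apply: (Idown _ (fjoin t (fsup [set` s]))).
  apply: Ijoin; first by apply: sI; rewrite /= mem_head.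
  by apply: IH => u us; apply: sI; rewrite /= in_cons us orbT.
apply: fsup_least => u; rewrite /= in_cons => /orP [/eqP ->|us].
- exact: fjoin_ubl.
- exact: fle_trans (fsup_ub us) (fjoin_ubr _ _).
Qed.

Definition finite_joins S := [set e | exists2 T, finite_set T /\ T `<=` S & e ⊑ fsup T].

Lemma is_ideal_finite_joins S : is_ideal (finite_joins S).
Proof.
split; first by exists set0; [split; [exact: finite_set0 |] | exact: fbot_le].
- by move=> e f [T TS fT] ef; exists T => //; exact: fle_trans fT.
- move=> e f [T [Tf TS] eT] [T' [Tf' TS'] fT']; exists (T `|` T').
    by split; [rewrite finite_setU | move=> t [/TS|/TS']].
  by apply: fjoin_lub; [apply: fle_trans eT _ | apply: fle_trans fT' _];
     apply: fsup_subset; [exact: subsetUl | exact: subsetUr].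
Qed.

Lemma is_filter_bigcup_chain (C : set (set L)) : C `<=` is_filter -> C !=set0 ->
  total_on C subset -> is_filter (\bigcup_(G in C) G).
Proof.
move=> Cfilter [G0 CG0] Ctot; split.
- by exists G0 => //; case: (Cfilter _ CG0).
- move=> a b [G CG Ga] ab; exists G => //.
  by case: (Cfilter _ CG) => _ Gup _; exact: Gup ab.
- move=> a b [G CG Ga] [H CH Hb].
  have [GH|HG] := Ctot _ _ CG CH.
  + by exists H => //; case: (Cfilter _ CH) => _ _; apply; [exact: GH|].
  + by exists G => //; case: (Cfilter _ CG) => _ _; apply; [|exact: HG].
Qed.

Lemma prime_filter_bigcap_chain (C : set (set L)) : C `<=` @prime_filter L ->
  C !=set0 -> total_on C subset -> prime_filter (\bigcap_(G in C) G).
Proof.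
move=> Cprime [G0 CG0] Ctot; split.
- by move=> G /Cprime [].
- by move=> /(_ _ CG0); case: (Cprime _ CG0).
- move=> a b Ca ab G CG; case: (Cprime _ CG) => _ _ Gup _ _.
  exact: Gup (Ca _ CG) ab.
- move=> a b Ca Cb G CG; case: (Cprime _ CG) => _ _ _ Gmeet _.
  exact: Gmeet (Ca _ CG) (Cb _ CG).
- move=> a b Cab; apply: contrapT => /not_orP [/existsNP [G /not_implyP [CG nGa]]
    /existsNP [H /not_implyP [CH nHb]]].
  have [GH|HG] := Ctot _ _ CG CH.
  + by case: (Cprime _ CG) => _ _ _ _ /(_ a b (Cab _ CG)) [//|/GH].
  + by case: (Cprime _ CH) => _ _ _ _ /(_ a b (Cab _ CH)) [/HG|].
Qed.

Lemma maximal_filter_prime I G : is_ideal I -> is_filter G ->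
  (forall a, G a -> ~ I a) ->
  (forall B, G `<` B -> is_filter B -> ~ (forall a, B a -> ~ I a)) ->
  prime_filter G.
Proof.
move=> [Ibot Idown Ijoin] Gfilter GI Gmax; have [Gtop Gup Gmeet] := Gfilter.
have outside c : ~ G c -> exists2 m, G m & I (fmeet m c).
  move=> nGc; apply: contrapT => nex; apply: (Gmax (adjoin_filter G c)).
  - split; first by move=> m Gm; exists m => //; exact: fmeet_lel.
    by move=> /(_ c) Gc; apply/nGc/Gc; exists (ftop L) => //; exact: fmeet_ler.
  - exact: is_filter_adjoin.
  - move=> e [m Gm me] Ie; apply: nex; exists m => //; exact: Idown Ie me.
split=> // [/GI //|c d Gcd]; apply: contrapT => /not_orP [/outside [m Gm Imc]
  /outside [m' Gm' Im'd]].
apply: (GI (fmeet (fmeet m m') (fjoin c d))).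
  exact: Gmeet (Gmeet _ _ Gm Gm') Gcd.
apply: Idown (Ijoin _ _ Imc Im'd) _; apply: fle_trans (fmeet_fjoin_le _ _ _) _.
by apply: fjoin_le2; apply: fmeet_le2 (fle_refl _); [exact: fmeet_lel | exact: fmeet_ler].
Qed.

Theorem prime_filter_theorem F I : is_filter F -> is_ideal I ->
  (forall a, F a -> ~ I a) ->
  exists G, [/\ prime_filter G, F `<=` G & forall a, G a -> ~ I a].
Proof.
move=> Ffilter Iideal FI.
have [||G [[Gfilter GI] FG Gmax]] := @Zorn_bigcup_above L
    [set G | is_filter G /\ forall a, G a -> ~ I a] F => //.
  move=> C CP C0 Ctot; split; first by apply: is_filter_bigcup_chain => // G /CP [].
  by move=> a [G /CP [_ GI] Ga]; exact: GI.
exists G; split=> //; apply: maximal_filter_prime Iideal Gfilter GI _.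
by move=> B GB Bfilter BI; exact: Gmax GB (conj Bfilter BI).
Qed.

End FrameLattice.

Section PrimeFilterPoints.
Variable L : frame.
Local Notation X := (XL L).
Implicit Types (a b c : L) (S : set L) (x y z w : X).

Lemma XL_top x : sval x (ftop L). Proof. by case: x => F []. Qed.
Lemma XL_nbot x : ~ sval x (fbot L). Proof. by case: x => F []. Qed.
Lemma XL_up x a b : sval x a -> a ⊑ b -> sval x b.
Proof. by case: x => F [] ? ? Fup ? ? /=; apply: Fup. Qed.
Lemma XL_meet x a b : sval x a -> sval x b -> sval x (fmeet a b).
Proof. by case: x => F [] ? ? ? Fmeet ? /=; apply: Fmeet. Qed.
Lemma XL_join x a b : sval x (fjoin a b) -> sval x a \/ sval x b.
Proof. by case: x => F [] ? ? ? ? Fjoin /=; apply: Fjoin. Qed.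

Lemma XL_meetE x a b : sval x (fmeet a b) -> sval x a /\ sval x b.
Proof.
by move=> xab; split; apply: XL_up xab _; [exact: fmeet_lel | exact: fmeet_ler].
Qed.

Lemma XL_ext x y : (forall a, sval x a <-> sval y a) -> x = y.
Proof. by case: x y => F PF [G PG] /= FG; apply/eq_exist/seteqP; split=> a /FG. Qed.

Lemma XL_separate F I : is_filter F -> is_ideal I -> (forall a, F a -> ~ I a) ->
  exists x : X, F `<=` sval x /\ forall a, sval x a -> ~ I a.
Proof.
move=> Ffilter Iideal FI.
have [G [Gprime FG GI]] := prime_filter_theorem Ffilter Iideal FI.
by exists (exist _ G Gprime).
Qed.

Lemma phi_subsetP a b : phi a `<=` phi b <-> a ⊑ b.
Proof.
split=> [ab|ab x xa]; last exact: XL_up ab.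
apply: contrapT => nab.
have [|x [ax xb]] := XL_separate (is_filter_principal a) (is_ideal_principal b).
  by move=> c ac cb; apply/nab/(fle_trans ac).
by apply: (xb b) (fle_refl _); apply/ab/ax/fle_refl.
Qed.

Lemma phiD_meets_fsup a c S x : sval x a -> ~ sval x c -> sval x (fsup S) ->
  exists2 s, S s & phi a `&` ~` phi c `&` phi s !=set0.
Proof.
move=> xa xc xS; apply: contrapT => none; apply/xc/(XL_up (XL_meet xa xS)).
apply: fmeet_fsup_le => s Ss; apply/phi_subsetP => w /XL_meetE [wa ws].
by apply: contrapT => wc; apply: none; exists s => //; exists w.
Qed.

End PrimeFilterPoints.

Section PriestleyTopology.
Variable L : frame.
Local Notation X := (XL L).
Local Notation le := (@XL_le L).
Implicit Types (a b c : L) (S : set L) (x y z w : X).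

Lemma subbase_open (U : set X) : XL_subbase U -> open U.
Proof.
move=> sU; exists [set U]; first by move=> V ->; apply: finI_from1.
by rewrite bigcup_set1.
Qed.

Lemma phi_open a : open (phi a).
Proof. by apply: subbase_open; exists a; left. Qed.

Lemma phiC_open a : open (~` phi a).
Proof. by apply: subbase_open; exists a; right. Qed.

Lemma phi_clopen a : clopen (phi a).
Proof. by split; [exact: phi_open | rewrite -openC; exact: phiC_open]. Qed.

Lemma phiC_clopen a : clopen (~` phi a).
Proof. exact/(@clopenC _ _ set0)/phi_clopen. Qed.

Lemma phi_nbhs x a : sval x a -> nbhs x (phi a).
Proof. by move=> xa; apply: open_nbhs_nbhs; split => //; exact: phi_open. Qed.

Lemma phiC_nbhs x a : ~ sval x a -> nbhs x (~` phi a).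
Proof. by move=> xa; apply: open_nbhs_nbhs; split => //; exact: phiC_open. Qed.

Lemma subbase_finI_basic (s : seq (set X)) x :
  (forall U, U \in s -> XL_subbase U) -> (forall U, U \in s -> U x) ->
  exists a c, [/\ sval x a, ~ sval x c &
    phi a `&` ~` phi c `<=` [set y | forall U, U \in s -> U y]].
Proof.
elim: s => [|U s IH] sb sx.
  by exists (ftop L), (fbot L); split; [exact: XL_top | exact: XL_nbot |].
have [||a [c [xa xc acs]]] := IH.
- by move=> V Vs; apply: sb; rewrite in_cons Vs orbT.
- by move=> V Vs; apply: sx; rewrite in_cons Vs orbT.
have := sx U (mem_head _ _); have [e [->|->]] := sb U (mem_head _ _) => xe.
- exists (fmeet a e), c; split => //; first exact: XL_meet.
  move=> y [/XL_meetE [ya ye] yc] V; rewrite in_cons => /orP [/eqP -> //|Vs].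
  exact: acs.
- exists a, (fjoin c e); split => //; first by case/XL_join.
  move=> y [ya ycj] V; rewrite in_cons => /orP [/eqP -> ye|Vs].
    by apply: ycj; apply: XL_up ye (fjoin_ubr _ _).
  by apply: acs Vs; split=> // yc; apply: ycj; apply: XL_up yc (fjoin_ubl _ _).
Qed.

Lemma nbhs_basic x (W : set X) : nbhs x W ->
  exists a c, [/\ sval x a, ~ sval x c & phi a `&` ~` phi c `<=` W].
Proof.
rewrite nbhsE => -[B [[D' D'sub <-] [V D'V Vx]] BW].
have [E Esub VE] := D'sub V D'V.
have [|| a [c [xa xc acV]]] := @subbase_finI_basic (finmap.enum_fset E) x.
- by move=> U UE; apply: set_mem; exact: Esub.
- by move=> U UE; move: Vx; rewrite -VE; apply.
exists a, c; split => // y acy; apply: BW; exists V => //.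
by change (V y); rewrite -VE => U UE; exact: acV.
Qed.

Lemma XL_not_le x y : ~ le x y -> exists a, sval x a /\ ~ sval y a.
Proof. by move=> /existsNP [a /not_implyP xya]; exists a. Qed.

Lemma XL_neq x y : x <> y -> ~ le x y \/ ~ le y x.
Proof.
move=> xy; apply: contrapT => /not_orP [/contrapT xley /contrapT ylex].
by apply: xy; apply: XL_ext => a; split => [/xley|/ylex].
Qed.

Lemma XL_compact : compact [set: X].
Proof.
rewrite compact_ultra => F UF _.
pose G : set L := [set a | F (phi a)].
have GC a : ~ G a -> F (~` phi a) by case: (in_ultra_setVsetC (phi a) UF).
have Gprime : prime_filter G.
  split.
  - by apply: filterS filterT => w _; exact: XL_top.
  - by move=> Gbot; apply: (filter_not_empty F); apply: filterS Gbot => w /XL_nbot.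
  - by move=> a b Ga ab; apply: filterS Ga; apply/phi_subsetP.
  - by move=> a b Ga Gb; apply: filterS (filterI Ga Gb) => w []; exact: XL_meet.
  - move=> a b Gab; have [Ga|nGa] := pselect (G a); first by left.
    by right; apply: filterS (filterI Gab (GC _ nGa)) => w [/XL_join []].
exists (exist _ G Gprime); split => // W /nbhs_basic [a [c [xa xc acW]]].
by apply: filterS acW _; apply: filterI; [exact: xa | exact: GC].
Qed.

Lemma XL_hausdorff : hausdorff_space X.
Proof.
move=> p q pq; apply: contrapT => /XL_neq [] /XL_not_le [a [ina nina]].
- by have [w [/= wa /= nwa]] := pq _ _ (phi_nbhs ina) (phiC_nbhs nina).
- by have [w [/= nwa /= wa]] := pq _ _ (phiC_nbhs nina) (phi_nbhs ina).
Qed.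

Lemma XL_stone : stone_space X.
Proof.
split; [exact: XL_compact | exact: XL_hausdorff |].
apply: zero_dimension_totally_disconnected => x y /eqP /XL_neq [] /XL_not_le [a [xa ya]].
- by exists (phi a); split => //; exact: phi_clopen.
- by exists (~` phi a); split => //; exact: phiC_clopen.
Qed.

Lemma phi_upset a : upset le (phi a).
Proof. by move=> x y xa xy; exact: xy. Qed.

Lemma XL_priestley : priestley_space le.
Proof.
split; first exact: XL_stone.
- split=> [x|x y z xy yz|x y xy yx]; [exact: subset_refl | exact: subset_trans yz |].
  by apply: XL_ext => a; split => [/xy|/yx].
- move=> x y /XL_not_le [a [xa ya]]; exists (phi a).
  by split => //; [exact: phi_clopen | exact: phi_upset].
Qed.

Lemma closed_not_below (K : set X) y : closed K -> ~ downset_of le K y ->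
  exists2 a, sval y a & phi a `&` K = set0.
Proof.
move=> Kclosed yK; apply: contrapT => /forall2NP Kmeets; apply: yK.
have Kcompact : compact K by exact: subclosed_compact Kclosed XL_compact _.
pose F := filter_from [set a | sval y a] (fun a => phi a `&` K).
have Fproper : ProperFilter F.
  apply: filter_from_proper => [|a ya]; last first.
    by case: (Kmeets a) => // /eqP /set0P.
  apply: filter_from_filter; first by exists (ftop L); exact: XL_top.
  move=> a b ya yb; exists (fmeet a b); first exact: XL_meet.
  by move=> w [/XL_meetE [wa wb] Kw].
have [|x [Kx xF]] := Kcompact F Fproper.
  by exists (ftop L); [exact: XL_top | move=> w []].
exists x => // a ya; apply: contrapT => xa.
have [w [[wa _] nwa]] := xF _ _ (ex_intro2 _ _ a ya (@subset_refl _ _)) (phiC_nbhs xa).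
exact: nwa.
Qed.

Lemma downset_closed (K : set X) : closed K -> closed (downset_of le K).
Proof.
move=> Kclosed; rewrite -openC openE => y /(closed_not_below Kclosed) [a ya aK].
apply: filterS (phi_nbhs ya) => w wa [x Kx wx].
by rewrite -[False]/(set0 x) -aK; split => //; exact: wx.
Qed.

(* If w omits fimp a c, the filter generated by w and a misses c. *)
Lemma phiC_fimp_downset a c :
  ~` phi (fimp a c) `<=` downset_of le (phi a `&` ~` phi c).
Proof.
move=> w wac.
have [|z [wz zc]] := XL_separate (is_filter_adjoin a (prime_filterW (proj2_sig w)))
  (is_ideal_principal c).
  move=> e [m wm me] ec; apply/wac/(XL_up wm)/fle_fimp.
  apply: fle_trans (fle_trans me ec).
  by apply: fmeet_glb; [exact: fmeet_ler | exact: fmeet_lel].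
exists z; last by move=> e we; apply: wz; exists e => //; exact: fmeet_lel.
split; first by apply: wz; exists (ftop L); [exact: XL_top | exact: fmeet_ler].
by move=> zc'; exact: zc c zc' (fle_refl _).
Qed.

Lemma downset_open (U : set X) : open U -> open (downset_of le U).
Proof.
rewrite !openE => Uopen y [x Ux yx].
have [a [c [xa xc acU]]] := nbhs_basic (Uopen x Ux).
have yac : ~ sval y (fimp a c).
  by move=> yac; apply/xc/(XL_up _ (fmeet_fimp_le a c))/XL_meet => //; exact: yx.
apply: filterS (phiC_nbhs yac) => w /phiC_fimp_downset [z acz wz].
by exists z => //; exact: acU.
Qed.

Lemma closure_bigcup_phi S : closure (\bigcup_(b in S) phi b) = phi (fsup S).
Proof.
apply/seteqP; split=> p.
- move=> pS; apply: contrapT => npS.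
  have [w [[b Sb wb] nwS]] := pS _ (phiC_nbhs npS).
  exact/nwS/(XL_up wb)/fsup_ub.
- move=> pS B /nbhs_basic [a [c [pa pc acB]]].
  have [s Ss [w [acw ws]]] := phiD_meets_fsup pa pc pS.
  by exists w; split; [exists s | exact: acB].
Qed.

Lemma open_upset_phi (U : set X) : open U -> upset le U ->
  U = \bigcup_(c in [set c | phi c `<=` U]) phi c.
Proof.
move=> Uopen Uup; apply/seteqP; split=> [x Ux|x [c cU /cU] //].
have [||a xa aU] := @closed_not_below (~` U) x.
- by rewrite closedC.
- by move=> [y nUy xy]; exact/nUy/(Uup _ _ Ux xy).
exists a => // y ya; apply: contrapT => nUy.
by rewrite -[False]/(set0 y) -aU.
Qed.

Lemma closure_open_upset (U : set X) : open U -> upset le U ->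
  closure U = phi (fsup [set c | phi c `<=` U]).
Proof. by move=> Uopen Uup; rewrite {1}(open_upset_phi Uopen Uup) closure_bigcup_phi. Qed.

Lemma ClopUp_phi (U : set X) : ClopUp le U -> U = phi (fsup [set c | phi c `<=` U]).
Proof.
by move=> [[Uopen Uclosed] Uup]; rewrite -closure_open_upset //; exact/closure_id.
Qed.

Lemma XL_L_space : L_space le.
Proof.
split; first exact: XL_priestley.
- by move=> U [Uopen Uclosed]; split; [exact: downset_open | exact: downset_closed].
- by move=> U Uopen Uup; rewrite closure_open_upset //; exact: phi_open.
Qed.

End PriestleyTopology.

Section ScottUpsets.
Variable L : frame.
Local Notation X := (XL L).
Local Notation le := (@XL_le L).
Implicit Types (a b c : L) (S : set L) (x y z w : X).

Definition completely_prime z :=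
  forall S, sval z (fsup S) -> exists2 s, S s & sval z s.

Lemma spatial_partP z : spatial_part le z <-> completely_prime z.
Proof.
split=> [[zdown _] S zS|zcp].
  have zz : downset_of le [set z] z by exists z => //; exact: subset_refl.
  have [a [c [za zc aczdown]]] := nbhs_basic (open_nbhs_nbhs (conj zdown zz)).
  have [s Ss [w [acw ws]]] := phiD_meets_fsup za zc zS.
  by exists s => //; have [_ -> wz] := aczdown w acw; exact: wz.
pose m := fsup [set b | ~ sval z b].
suff E : downset_of le [set z] = ~` phi m.
  by rewrite /spatial_part /= E; exact: phiC_clopen.
apply/seteqP; split=> [w [_ -> wz] wm|w nwm].
  by have [b nzb zb] := zcp _ (wz _ wm).
exists z => // b wb; apply: contrapT => nzb.
exact/nwm/(XL_up wb)/fsup_ub.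
Qed.

Lemma compact_minimal_completely_prime b z :
  KL b -> minimal_elts le (phi b) z -> completely_prime z.
Proof.
move=> bcompact [zb zmin] S zS; apply: contrapT => noS.
have nzS s : S s -> ~ sval z s by move=> Ss zs; apply: noS; exists s.
have zC_ideal := is_ideal_compl_prime (proj2_sig z).
(* A point of phi b avoiding the ideal generated by ~` z and fsup S lies below
   z, hence equals z by minimality, yet omits fsup S. *)
have [|w [bw wI]] :=
  XL_separate (is_filter_principal b) (is_ideal_adjoin (fsup S) zC_ideal).
  move=> e be [j nzj ej].
  have [T [Tfinite TS] bT] : finite_joins (S `|` [set j]) b.
    apply: bcompact; apply: fle_trans (fle_trans be ej) _.
    apply: fjoin_lub; first exact/fsup_ub/or_intror.
    exact/fsup_subset/subsetUl.
  have zT : (~` sval z) (fsup T).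
    by apply: ideal_fsup zC_ideal Tfinite _ => t /TS [/nzS | ->].
  exact/zT/(XL_up zb).
have wz : le w z.
  move=> e we; apply: contrapT => nze; apply: (wI e we).
  by exists e => //; exact: fjoin_ubl.
have wE : w = z by apply: zmin wz; exact/bw/fle_refl.
apply: (wI (fsup S)); first by rewrite wE.
by exists (fbot L); [exact: XL_nbot | exact: fjoin_ubr].
Qed.

Lemma compact_ClopSUp b : KL b -> ClopSUp le (phi b).
Proof.
move=> bcompact; split; first exact: phi_clopen.
split; [exact: (phi_clopen b).2 | exact: phi_upset |].
by move=> z bz; apply/spatial_partP; exact: compact_minimal_completely_prime bz.
Qed.

Lemma minimal_below b x : sval x b ->
  exists z, minimal_elts le (phi b) z /\ le z x.
Proof.
move=> xb.
have [||G [[Gprime Gb] Gx Gmin]] :=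
  @Zorn_bigcap_below L [set G | prime_filter G /\ G b] (sval x).
- by split => //; exact: (proj2_sig x).
- move=> C CP C0 Ctot; split; first by apply: prime_filter_bigcap_chain => // G /CP [].
  by move=> G /CP [].
exists (exist _ G Gprime); split => //; split => // y yb yG.
apply: XL_ext => a; split => [/yG //|Ga]; apply: contrapT => nya.
apply: (Gmin (sval y)); last by split => //; exact: (proj2_sig y).
by split => // /(_ a Ga).
Qed.

Lemma ClopSUp_compact b : ClopSUp le (phi b) -> KL b.
Proof.
move=> [_ [_ _ minimal_spatial]] S bS; apply: contrapT => bS_fin.
have [|x [bx xI]] := XL_separate (is_filter_principal b) (is_ideal_finite_joins S).
  by move=> e be [T TS eT]; apply: bS_fin; exists T => //; exact: fle_trans eT.
have [z [zmin zx]] := minimal_below (bx _ (fle_refl b)).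
have /spatial_partP zcp := minimal_spatial z zmin.
have [s Ss zs] := zcp _ (XL_up zmin.1 bS).
apply: (xI s (zx s zs)); exists [set s]; last exact: fsup_ub.
by split; [exact: finite_set1 | move=> t ->].
Qed.

Lemma ClopSUp_phi (U : set X) : ClopSUp le U -> exists2 b, KL b & U = phi b.
Proof.
move=> USUp; have [Uclopen [_ Uup _]] := USUp.
rewrite (ClopUp_phi (conj Uclopen Uup)) in USUp *.
by eexists; [exact: ClopSUp_compact USUp |].
Qed.

Lemma core_phi a :
  core le (phi a) = \bigcup_(b in [set b | KL b /\ b ⊑ a]) phi b.
Proof.
apply/seteqP; split=> x.
- by move=> [_ [/ClopSUp_phi [b bcompact ->] /phi_subsetP ba] xb]; exists b.
- move=> [b [bcompact ba] xb]; exists (phi b) => //.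
  by split; [exact: compact_ClopSUp | exact/phi_subsetP].
Qed.

Lemma compact_sup_denseP a :
  a = fsup [set b | KL b /\ b ⊑ a] <-> dense_in (core le (phi a)) (phi a).
Proof.
rewrite /dense_in core_phi closure_bigcup_phi phi_subsetP.
split=> [{1}->|asup]; first exact: fle_refl.
by apply: fle_antisym asup _; apply: fsup_least => b [].
Qed.

End ScottUpsets.

Theorem theorem4p4 (L : frame) :
  (forall a : L,
     a = fsup [set b | KL b /\ fle b a] <->
     dense_in (core (@XL_le L) (phi a)) (phi a)) /\
  (algebraic_frame L <-> algebraic_L_space (@XL_le L)).
Proof.
split; first exact: compact_sup_denseP.
split=> [Lalg|[_ Xalg] a].
- split=> [|U ClopUpU]; first exact: XL_L_space.
  by rewrite (ClopUp_phi ClopUpU); apply/compact_sup_denseP/Lalg.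
- by apply/compact_sup_denseP/Xalg; split; [exact: phi_clopen | exact: phi_upset].
Qed.
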